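(* Let $G$ be a finite group and $(c,\kappa_R,\kappa_L,b,a)\in\widetilde{\mathcal{PD}}(G)$. Set $\tilde c(g,h,k):=(-1)^{b(g)\cdot\kappa_R^{a(g)}(h,k)}c(g,h,k)$. Then $(\tilde c,\kappa_R,\kappa_R,0,a)\in\widetilde{\mathcal{PD}}(G)$ and $(c,\kappa_R,\kappa_L,b,a)\sim(\tilde c,\kappa_R,\kappa_R,0,a)$.
   Context: $\mathbb Z_2=\{0,1\}$ (additive group), $\mathrm U(1)$ multiplicative. For $A\in\{\mathbb Z_2,\mathrm U(1)\}$, $A\oplus A$ has componentwise group operation and the $\mathbb Z_2$-action $x^{a}=\begin{pmatrix}0&1\\1&0\end{pmatrix}^ax$ (swap components when $a=1$). $C^n(G,A\oplus A)$ denotes all maps $G^n\to A\oplus A$; $H^1(G,\mathbb Z_2)$ denotes group homomorphisms $G\to\mathbb Z_2$. For $a\in H^1(G,\mathbb Z_2)$: on $\mathbb Z_2\oplus\mathbb Z_2$-valued cochains, $d^1_ax(g,h)=x^{a(g)}(h)+x(g)-x(gh)$, $d^2_ay(g,h,k)=y^{a(g)}(h,k)+y(g,hk)-y(gh,k)-y(g,h)$; on $\mathrm U(1)\oplus\mathrm U(1)$-valued cochains (multiplicatively), $d^2_ay(g,h,k)=\frac{y^{a(g)}(h,k)\,y(g,hk)}{y(gh,k)\,y(g,h)}$, $d^3_az(g,h,k,f)=\frac{z^{a(g)}(h,k,f)\,z(g,hk,f)\,z(g,h,k)}{z(gh,k,f)\,z(g,h,kf)}$. For $x,y\in\mathbb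 Z_2\oplus\mathbb Z_2$, $x\cdot y:=(x_+y_+,x_-y_-)$ and $(-1)^x:=((-1)^{x_+},(-1)^{x_-})$. $\widetilde{\mathcal{PD}}(G)$ is the set of pentads $(c,\kappa_R,\kappa_L,b,a)$ with $c\in C^3(G,\mathrm U(1)\oplus\mathrm U(1))$, $\kappa_R,\kappa_L\in C^2(G,\mathbb Z_2\oplus\mathbb Z_2)$, $b\in C^1(G,\mathbb Z_2\oplus\mathbb Z_2)$, $a\in H^1(G,\mathbb Z_2)$ with $d^1_ab=\kappa_L+\kappa_R$, $d^2_a\kappa_R=0$, $d^2_a\kappa_L=0$, $d^3_ac(g,h,k,f)=(-1)^{\kappa_L(g,h)\cdot\kappa_R^{a(gh)}(k,f)}$. The relation $\sim$: $(c^{(1)},\kappa_R^{(1)},\kappa_L^{(1)},b^{(1)},a^{(1)})\sim(c^{(2)},\kappa_R^{(2)},\kappa_L^{(2)},b^{(2)},a^{(2)})$ iff $a^{(1)}=a^{(2)}=:a$ and there exist $m\in C^1(G,\mathbb Z_2\oplus\mathbb Z_2)$, $\sigma\in C^2(G,\mathrm U(1)\oplus\mathrm U(1))$ with $\kappa_R^{(2)}=d^1_am+\kappa_R^{(1)}$, $\kappa_L^{(2)}=d^1_ab^{(2)}-d^1_ab^{(1)}-d^1_am+\kappa_L^{(1)}$, and $c^{(2)}(g,h,k)=(-1)^{\kappa_L^{(1)}(g,h)\cdot m^{a(gh)}(k)}(-1)^{(b^{(2)}(g)-b^{(1)}(g)-m(g))\cdot(\kappa_R^{(2)})^{a(g)}(h,k)}d^2_a\sigma(g,h,k)c^{(1)}(g,h,k)$.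 *)

From HB Require Import structures.
From mathcomp Require Import all_boot all_order all_algebra all_fingroup.
From mathcomp Require Import complex reals.
Set Implicit Arguments. Unset Strict Implicit. Unset Printing Implicit Defensive.
Import GRing.Theory Num.Theory.
Local Open Scope ring_scope.

(* Conventions:
   - Z_2 is the ring 'Z_2 (its additive group is the group Z_2 = {0,1}).
   - Z_2 (+) Z_2 is the product zmodType 'Z_2 * 'Z_2 (componentwise).
   - U(1) (+) U(1) is modelled as pairs of complex numbers R[i] (R a realType),
     each component of modulus 1; the group law is componentwise multiplication.
   - G is the whole carrier of a finGroupType gT; n-cochains are curried maps. *)

Definition Z22 := ('Z_2 * 'Z_2)%type.

Definition actZ (a : 'Z_2) (x : Z22) : Z22 := if a == 0 then x else (x.2, x.1).
Definition dotZ (x y : Z22) : Z22 := (x.1 * y.1, x.2 * y.2).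

Section UOps.
Variable R : realType.
Definition U2 := (R[i] * R[i])%type.
Definition isU (z : U2) : Prop := `|z.1| = 1 /\ `|z.2| = 1.
Definition actU (a : 'Z_2) (z : U2) : U2 := if a == 0 then z else (z.2, z.1).
Definition mulU (z w : U2) : U2 := (z.1 * w.1, z.2 * w.2).
Definition divU (z w : U2) : U2 := (z.1 / w.1, z.2 / w.2).
Definition signU (x : Z22) : U2 :=
  ((-1) ^+ (nat_of_ord x.1), (-1) ^+ (nat_of_ord x.2)).
End UOps.

Section Cochains.
Variables (R : realType) (gT : finGroupType).

Definition is_hom_Z2 (a : gT -> 'Z_2) : Prop :=
  forall g h : gT, a (g * h)%g = (a g + a h)%R.

Definition d1 (a : gT -> 'Z_2) (x : gT -> Z22) (g h : gT) : Z22 :=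
  (actZ (a g) (x h) + x g - x (g * h)%g)%R.

Definition d2 (a : gT -> 'Z_2) (y : gT -> gT -> Z22) (g h k : gT) : Z22 :=
  (actZ (a g) (y h k) + y g (h * k)%g - y (g * h)%g k - y g h)%R.

Definition d2U (a : gT -> 'Z_2) (y : gT -> gT -> U2 R) (g h k : gT) : U2 R :=
  divU (mulU (actU (a g) (y h k)) (y g (h * k)%g)) (mulU (y (g * h)%g k) (y g h)).

Definition d3U (a : gT -> 'Z_2) (z : gT -> gT -> gT -> U2 R) (g h k f : gT)
  : U2 R :=
  divU (mulU (mulU (actU (a g) (z h k f)) (z g (h * k)%g f)) (z g h k))
       (mulU (z (g * h)%g k f) (z g h (k * f)%g)).

Definition PDt (c : gT -> gT -> gT -> U2 R) (kR kL : gT -> gT -> Z22)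
  (b : gT -> Z22) (a : gT -> 'Z_2) : Prop :=
  [/\ (forall g h k, isU (c g h k)) /\ is_hom_Z2 a,
      forall g h, d1 a b g h = (kL g h + kR g h)%R,
      forall g h k, d2 a kR g h k = 0%R,
      forall g h k, d2 a kL g h k = 0%R &
      forall g h k f, d3U a c g h k f
                      = signU R (dotZ (kL g h) (actZ (a (g * h)%g) (kR k f)))].

Definition PDrel
  (c1 : gT -> gT -> gT -> U2 R) (kR1 kL1 : gT -> gT -> Z22) (b1 : gT -> Z22)
  (a1 : gT -> 'Z_2)
  (c2 : gT -> gT -> gT -> U2 R) (kR2 kL2 : gT -> gT -> Z22) (b2 : gT -> Z22)
  (a2 : gT -> 'Z_2) : Prop :=
  a1 = a2 /\
  exists (m : gT -> Z22) (sigma : gT -> gT -> U2 R),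
    [/\ forall g h, isU (sigma g h),
        forall g h, kR2 g h = (d1 a1 m g h + kR1 g h)%R,
        forall g h, kL2 g h
                    = (d1 a1 b2 g h - d1 a1 b1 g h - d1 a1 m g h + kL1 g h)%R &
        forall g h k, c2 g h k =
          mulU (mulU (mulU
            (signU R (dotZ (kL1 g h) (actZ (a1 (g * h)%g) (m k))))
            (signU R (dotZ (b2 g - b1 g - m g)%R (actZ (a1 g) (kR2 h k)))))
            (d2U a1 sigma g h k))
            (c1 g h k)].
End Cochains.

From HB Require Import structures.
From mathcomp Require Import all_boot all_order all_algebra all_fingroup.
From mathcomp Require Import complex reals.
From mathcomp Require Import ring.
Set Implicit Arguments. Unset Strict Implicit. Unset Printing Implicit Defensive.
Import GRing.Theory Num.Theory.
Local Open Scope ring_scope.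

(* Twisting c by the sign of the cup product b ∪ κ_R multiplies d^3 c by
   (-1)^(d(b ∪ κ_R)).  By the Leibniz rule d(b ∪ κ) = db ∪ κ - b ∪ dκ and the
   cocycle condition dκ_R = 0 this is (-1)^((κ_L + κ_R) ∪ κ_R), which in
   characteristic 2 turns the obstruction κ_L ∪ κ_R into κ_R ∪ κ_R.  The
   equivalence of the two pentads is then witnessed by m = 0 and σ = 1. *)

Lemma Z2_cases (x : 'Z_2) : x = 0 \/ x = 1.
Proof. by case: x => [[|[|?]] ?]; [left | right | by []]; apply/eqP. Qed.

Lemma addZ22_self (x : Z22) : x + x = 0.
Proof.
by case: x => x y; case: (Z2_cases x) => ->; case: (Z2_cases y) => ->; apply/eqP.
Qed.

Lemma oppZ22 (x : Z22) : - x = x.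
Proof. by apply/eqP; rewrite eqr_oppLR -subr_eq0 opprK addZ22_self. Qed.

Lemma dotZE (x y : Z22) : dotZ x y = x * y.
Proof. by []. Qed.

Lemma actZ0 a : actZ a 0 = 0.
Proof. by case: (Z2_cases a) => ->. Qed.

Lemma actZD a : {morph actZ a : x y / x + y}.
Proof. by case: (Z2_cases a) => ->. Qed.

Lemma actZN a : {morph actZ a : x / - x}.
Proof. by case: (Z2_cases a) => ->. Qed.

Lemma actZM a : {morph actZ a : x y / x * y}.
Proof. by case: (Z2_cases a) => ->. Qed.

Lemma actZ_comp a a' x : actZ a (actZ a' x) = actZ (a + a') x.
Proof. by case: (Z2_cases a) => ->; case: (Z2_cases a') => ->; case: x. Qed.

Lemma signr_Z2D (S : pzRingType) (x y : 'Z_2) :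
  (-1) ^+ (x + y)%R = (-1) ^+ x * (-1) ^+ y :> S.
Proof. by rewrite -exprD -signr_odd -[RHS]signr_odd /= modn2 oddb. Qed.

Section CupProduct.
Variables (gT : finGroupType) (a : gT -> 'Z_2).
Hypothesis a_hom : is_hom_Z2 a.

Definition d3 (z : gT -> gT -> gT -> Z22) (g h k f : gT) : Z22 :=
  actZ (a g) (z h k f) + z g (h * k)%g f + z g h k
  - z (g * h)%g k f - z g h (k * f)%g.

Definition cup12 (x : gT -> Z22) (y : gT -> gT -> Z22) (g h k : gT) : Z22 :=
  dotZ (x g) (actZ (a g) (y h k)).

Definition cup22 (x y : gT -> gT -> Z22) (g h k f : gT) : Z22 :=
  dotZ (x g h) (actZ (a (g * h)%g) (y k f)).

Lemma d1_cst0 g h : d1 a (fun _ => 0) g h = 0.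
Proof. by rewrite /d1 actZ0 !addr0 subr0. Qed.

Lemma d3_cup12 x y g h k f :
  d3 (cup12 x y) g h k f
  = cup22 (d1 a x) y g h k f - x g * actZ (a g) (d2 a y h k f).
Proof.
rewrite /d3 /cup12 /cup22 /d1 /d2 !dotZE !actZD !actZN !actZM !actZ_comp.
by rewrite -!a_hom; ring.
Qed.

End CupProduct.

Section Signs.
Variable R : realType.

Lemma signUD (x y : Z22) : signU R (x + y) = mulU (signU R x) (signU R y).
Proof. by rewrite /signU /mulU /= !signr_Z2D. Qed.

Lemma signU0 : signU R 0 = (1, 1).
Proof. by []. Qed.

Lemma signUN (x : Z22) : signU R (- x) = signU R x.
Proof. by rewrite oppZ22. Qed.

Lemma actU_signU a (x : Z22) : actU a (signU R x) = signU R (actZ a x).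
Proof. by case: (Z2_cases a) => ->. Qed.

Lemma isU_signU (x : Z22) : isU (signU R x).
Proof. by split; rewrite normrX normrN1 expr1n. Qed.

Lemma isU_mulU (z w : U2 R) : isU z -> isU w -> isU (mulU z w).
Proof. by move=> [z1 z2] [w1 w2]; split; rewrite normrM ?z1 ?z2 ?w1 ?w2 mulr1. Qed.

Lemma mul1U (z : U2 R) : mulU (1, 1) z = z.
Proof. by case: z => z1 z2; rewrite /mulU !mul1r. Qed.

Lemma mulU1 (z : U2 R) : mulU z (1, 1) = z.
Proof. by case: z => z1 z2; rewrite /mulU !mulr1. Qed.

Variables (gT : finGroupType) (a : gT -> 'Z_2).

Lemma d3U_mulU (z w : gT -> gT -> gT -> U2 R) g h k f :
  d3U a (fun g h k => mulU (z g h k) (w g h k)) g h k f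
  = mulU (d3U a z g h k f) (d3U a w g h k f).
Proof.
rewrite /d3U /divU /mulU /actU; case: (a g == 0) => /=;
  by congr pair; rewrite !invfM; ring.
Qed.

Lemma d3U_signU (z : gT -> gT -> gT -> Z22) g h k f :
  d3U a (fun g h k => signU R (z g h k)) g h k f = signU R (d3 a z g h k f).
Proof.
rewrite /d3U /d3 actU_signU !signUD !signUN /divU /mulU /=.
by congr pair; rewrite !invfM !invr_sign; ring.
Qed.

Lemma d2U_cst1 g h k : d2U a (fun _ _ => (1, 1) : U2 R) g h k = (1, 1).
Proof.
by rewrite /d2U /divU /mulU /actU; case: ifP => _; rewrite /= !mul1r invr1.
Qed.

End Signs.

Section Twist.
Variables (R : realType) (gT : finGroupType).
Variables (c : gT -> gT -> gT -> U2 R) (kR kL : gT -> gT -> Z22).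
Variables (b : gT -> Z22) (a : gT -> 'Z_2).
Hypothesis PD : PDt c kR kL b a.

Definition twist (g h k : gT) : U2 R :=
  mulU (signU R (cup12 a b kR g h k)) (c g h k).

Lemma d3U_twist g h k f :
  d3U a twist g h k f = signU R (cup22 a kR kR g h k f).
Proof.
case: PD => [[_ a_hom] db dkR _ dc].
rewrite (d3U_mulU a (fun g h k => signU R (cup12 a b kR g h k)) c).
rewrite d3U_signU (d3_cup12 a_hom) dkR actZ0 mulr0 subr0 dc -signUD.
by rewrite /cup22 db !dotZE -mulrDl addrAC addZ22_self add0r.
Qed.

Lemma PDt_twist : PDt twist kR kR (fun _ => 0) a.
Proof.
case: PD => [[cU a_hom] _ dkR _ _]; split=> //.
- by split=> // g h k; apply: isU_mulU; [exact: isU_signU | exact: cU].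
- by move=> g h; rewrite d1_cst0 addZ22_self.
- exact: d3U_twist.
Qed.

Lemma PDrel_twist : PDrel c kR kL b a twist kR kR (fun _ => 0) a.
Proof.
case: PD => [_ db _ _ _]; split=> //.
exists (fun _ => 0), (fun _ _ => (1, 1)); split.
- by move=> g h; split; rewrite normr1.
- by move=> g h; rewrite d1_cst0 add0r.
- by move=> g h; rewrite !d1_cst0 db subr0 sub0r oppZ22 addrAC addZ22_self add0r.
- move=> g h k.
  by rewrite actZ0 dotZE mulr0 signU0 mul1U sub0r subr0 oppZ22 d2U_cst1 mulU1.
Qed.

End Twist.

Theorem lemma2p4 (R : realType) (gT : finGroupType)
  (c : gT -> gT -> gT -> U2 R) (kR kL : gT -> gT -> Z22) (b : gT -> Z22)
  (a : gT -> 'Z_2) :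
  PDt c kR kL b a ->
  let ct : gT -> gT -> gT -> U2 R :=
    fun g h k => mulU (signU R (dotZ (b g) (actZ (a g) (kR h k)))) (c g h k) in
  PDt ct kR kR (fun _ => 0) a /\
  PDrel c kR kL b a ct kR kR (fun _ => 0) a.
Proof. move=> PD ct; split; [exact: (PDt_twist PD) | exact: (PDrel_twist PD)]. Qed.
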